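(* Let $a>b>0$ and $\lambda\ge 0$, and let $D_T$, $D_C$ be the subsets of the plane $\mathbb{R}^2(s,h)$ defined in the context. Put $$\Lambda(a,b)=\frac{a^6-33a^4b^2-33a^2b^4+b^6+(a^4+14a^2b^2+b^4)^{3/2}}{54a^2b^2}.$$ If $\lambda^4<\Lambda(a,b)$, then $D_T$ and $D_C$ have exactly two common points, and these are the points $(s,h)$ determined by $$(a^2-s^2)(s^2-b^2)-2\lambda^2s^3=0,\qquad s>0,\qquad h=\frac{2s^2-s\lambda^2+a^2+b^2}{2s}.$$ If $\lambda^4=\Lambda(a,b)$, these two points merge into a single point at which the curves $D_T$ and $D_C$ are tangent. If $\lambda^4>\Lambda(a,b)$, then $D_T$ and $D_C$ have no common points.
   Context: Parameters: $a>b>0$, $\lambda\ge 0$. Define $$F_C(s,h)=3s^4-2\Big(h-\frac{\lambda^2}{2}\Big)s^3+a^2b^2,\qquad F_T(s,h)=2s^2-2\Big(h+\frac{\lambda^2}{2}\Big)s+a^2+b^2.$$ Sets in the $(s,h)$-plane: $D_T=\{(s,h): F_T(s,h)=0,\ s>0,\ 2\lambda^2 s\le (a+b)^2\}$; $D_C=\{(s,h): F_C(s,h)=0,\ s\in\{-\sqrt{ab}\}\cup(0,s_*]\}$, where $s_*$ is the largest real root of the polynomial $$ \begin{aligned} \Phi_C(s)={}&[a^4b^4-6a^2b^2s^4+4(a^2+b^2)s^6-3s^8]^2\\ &+2[3a^6b^6+3a^4b^4s^4-20a^2b^2(a^2+b^2)s^6+57a^2b^2s^8-12(a^2+b^2)s^{10}+s^{12}]s^3\lambda^2\\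 &+4[3a^4b^4+15a^2b^2s^4-(a^2+b^2)s^6]s^6\lambda^4+8a^2b^2s^9\lambda^6 \end{aligned} $$ (such a root exists and is positive). *)

From Stdlib Require Import Reals.
From Coquelicot Require Import Coquelicot.
Open Scope R_scope.

Definition F_C (a b lam s h : R) : R :=
  3 * s ^ 4 - 2 * (h - lam ^ 2 / 2) * s ^ 3 + a ^ 2 * b ^ 2.

Definition F_T (a b lam s h : R) : R :=
  2 * s ^ 2 - 2 * (h + lam ^ 2 / 2) * s + a ^ 2 + b ^ 2.

Definition Phi_C (a b lam s : R) : R :=
  (a ^ 4 * b ^ 4 - 6 * a ^ 2 * b ^ 2 * s ^ 4 + 4 * (a ^ 2 + b ^ 2) * s ^ 6
     - 3 * s ^ 8) ^ 2
  + 2 * (3 * a ^ 6 * b ^ 6 + 3 * a ^ 4 * b ^ 4 * s ^ 4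
         - 20 * a ^ 2 * b ^ 2 * (a ^ 2 + b ^ 2) * s ^ 6
         + 57 * a ^ 2 * b ^ 2 * s ^ 8 - 12 * (a ^ 2 + b ^ 2) * s ^ 10
         + s ^ 12) * s ^ 3 * lam ^ 2
  + 4 * (3 * a ^ 4 * b ^ 4 + 15 * a ^ 2 * b ^ 2 * s ^ 4
         - (a ^ 2 + b ^ 2) * s ^ 6) * s ^ 6 * lam ^ 4
  + 8 * a ^ 2 * b ^ 2 * s ^ 9 * lam ^ 6.

Definition is_largest_root_PhiC (a b lam r : R) : Prop :=
  Phi_C a b lam r = 0 /\ (forall x, Phi_C a b lam x = 0 -> x <= r).

Definition in_D_T (a b lam s h : R) : Prop :=
  F_T a b lam s h = 0 /\ 0 < s /\ 2 * lam ^ 2 * s <= (a + b) ^ 2.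

Definition in_D_C (a b lam s h : R) : Prop :=
  F_C a b lam s h = 0 /\
  (s = - sqrt (a * b) \/
   (0 < s /\ exists sstar, is_largest_root_PhiC a b lam sstar /\ s <= sstar)).

Definition Lambda (a b : R) : R :=
  let q := a ^ 4 + 14 * a ^ 2 * b ^ 2 + b ^ 4 in
  (a ^ 6 - 33 * a ^ 4 * b ^ 2 - 33 * a ^ 2 * b ^ 4 + b ^ 6 + q * sqrt q)
  / (54 * a ^ 2 * b ^ 2).

Definition common_sys (a b lam s h : R) : Prop :=
  (a ^ 2 - s ^ 2) * (s ^ 2 - b ^ 2) - 2 * lam ^ 2 * s ^ 3 = 0 /\ 0 < s /\
  h = (2 * s ^ 2 - s * lam ^ 2 + a ^ 2 + b ^ 2) / (2 * s).

Definition tangent_at (F G : R -> R -> R) (s h : R) : Prop :=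
  let Fs := Derive (fun x => F x h) s in
  let Fh := Derive (fun y => F s y) h in
  let Gs := Derive (fun x => G x h) s in
  let Gh := Derive (fun y => G s y) h in
  F s h = 0 /\ G s h = 0 /\
  (Fs <> 0 \/ Fh <> 0) /\ (Gs <> 0 \/ Gh <> 0) /\
  Fs * Gh - Fh * Gs = 0.

(* Subtracting F_C from s^2 F_T eliminates h and leaves the quartic
   (a^2 - s^2)(s^2 - b^2) - 2 lam^2 s^3, whose positive roots are the s with
   lam^2 = psi(s) := (a^2 - s^2)(s^2 - b^2) / (2 s^3).  On (b, a), psi has a single peak at m,
   where m^4 + (a^2 + b^2) m^2 = 3 a^2 b^2, and Lambda(a, b) = psi(m)^2; the identity
   m^3 g(s) = 2 m^3 s^3 (psi(m) - lam^2) - (s - m)^2 (m^3 s^2 + 2 a^2 b^2 s + a^2 b^2 m)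
   then yields two, one (double, hence tangency) or no common points.  The remaining
   constraint s <= s_* of D_C holds because, after normalising b = 1, some t >= a has
   Phi_C(t) <= 0: choose t on the curve where the lam-free part of Phi_C vanishes; there Phi_C
   is 2 M times a convex quadratic in M = t^3 lam^2, nonpositive at both ends of the admissible
   range of M, which comes down to the negativity of two univariate polynomials, certified by
   their Bernstein coefficients. *)

From Stdlib Require Import Reals Lra Psatz List Classical.
From Coquelicot Require Import Coquelicot.
Import ListNotations.
Open Scope R_scope.

(* Phi_C with b = 1, written in [A = a^2] and [L = lam^2] and expanded in powers of [L]. *)
Definition Phi0 (A s : R) : R := A^2 - 6*A*s^4 + 4*(A+1)*s^6 - 3*s^8.
Definition Phi1 (A s : R) : R :=
  3*A^3 + 3*A^2*s^4 - 20*A*(A+1)*s^6 + 57*A*s^8 - 12*(A+1)*s^10 + s^12.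
Definition Phi2 (A s : R) : R := 3*A^2 + 15*A*s^4 - (A+1)*s^6.
Definition Phin (A L s : R) : R :=
  Phi0 A s ^ 2 + 2*Phi1 A s * s^3 * L + 4*Phi2 A s * s^6 * L^2 + 8*A*s^9*L^3.
Definition Phin_quad (A s M : R) : R := Phi1 A s + 2*M*Phi2 A s + 4*A*M^2.

Lemma Phi_C_scale a b lam t : 0 < b ->
  Phi_C a b lam t = b^16 * Phin (a^2/b^2) (lam^2/b) (t/b).
Proof. intros Hb; unfold Phi_C, Phin, Phi0, Phi1, Phi2; field; lra. Qed.

Lemma Phin_Phi0_eq0 A L s : Phi0 A s = 0 ->
  Phin A L s = 2 * (s^3*L) * Phin_quad A s (s^3*L).
Proof. intros H0; unfold Phin, Phin_quad; rewrite H0; ring. Qed.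

Definition Apar (p : R) : R := (3 + 8*p^2 + 6*p^4 - p^8) / (16*p^2).
Definition spar (p : R) : R := (1 + p^2) / (2*p).

Lemma Phi0_par p : p <> 0 -> Phi0 (Apar p) (spar p) = 0.
Proof. intros; unfold Phi0, Apar, spar; field; auto. Qed.

Lemma Phi1_par p : p <> 0 ->
  Phi1 (Apar p) (spar p) = - (1-p^2)^6 * (1+p^2)^9 / (512*p^12).
Proof. intros; unfold Phi1, Apar, spar; field; auto. Qed.

Lemma spar_sq_sub_Apar p : p <> 0 -> spar p ^ 2 - Apar p = (1 - p^4)^2 / (16*p^2).
Proof. intros; unfold spar, Apar; field; auto. Qed.

Definition cert_hi (p : R) : R :=
  15552 - 221184*p - 77760*p^2 + 11354112*p^3 - 134074304*p^4 + 24010752*p^5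
  - 99648*p^6 + 2457600*p^7 - 19584*p^8 - 3710976*p^9 + 56960*p^10
  - 442368*p^11 - 11136*p^12 + 106496*p^13 - 11904*p^14 + 3008*p^16
  + 1344*p^18 - 192*p^20 - 64*p^22.

Definition cert_lo (p : R) : R :=
  - 576 - 32336*p + 28416*p^2 + 198768*p^3 + 121344*p^4 - 487488*p^5
  + 148224*p^6 + 658368*p^7 + 20352*p^8 - 491616*p^9 - 54016*p^10
  + 195360*p^11 - 9216*p^12 - 33088*p^13 + 8448*p^14 + 192*p^15
  - 832*p^16 + 48*p^17 - 16*p^19.

Lemma Phin_quad_par_hi p : p <> 0 ->
  Phin_quad (Apar p) (spar p) (spar p ^ 3 * (Apar p - 1)^2 / 8)
  = p^20 * (1-p^2)^6 * (1+p^2)^9 * cert_hi p / (2*p)^36.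
Proof. intros; unfold Phin_quad, Phi1, Phi2, cert_hi, Apar, spar; field; auto. Qed.

Lemma Phin_quad_par_lo p : p <> 0 ->
  Phin_quad (Apar p) (spar p) (spar p ^ 3 * Apar p / 4)
  = p^11 * (1+p^2)^9 * cert_lo p / (2*p)^24.
Proof. intros; unfold Phin_quad, Phi1, Phi2, cert_lo, Apar, spar; field; auto. Qed.

(* [bern [c_0; ...; c_n] y z = sum_i c_i y^i z^(n-i)]. *)
Fixpoint bern (l : list R) (y z : R) : R :=
  match l with
  | nil => 0
  | c :: l' => c * z ^ length l' + y * bern l' y z
  end.

Lemma bern_nonpos l y z :
  List.Forall (fun c => c <= 0) l -> 0 <= y -> 0 <= z -> bern l y z <= 0.
Proof.
  intros Hl Hy Hz; induction Hl as [|c l Hc _ IH]; simpl; [lra|].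
  assert (0 <= z ^ length l) by (apply pow_le; lra).
  nra.
Qed.

(* Bernstein coefficients of [cert_hi] on [1/4, 1] and of [cert_lo] on [0, 1/4]. *)
Definition cert_hi_bern : list R :=
  [-100980407789878065; -3466509734283850680; -55353807169199630496; -547083500167840247808;
   -3758131816199752611840; -19108947267171549904896; -74798248519051934957568;
   -231415641532473167314944; -576414460203861773647872; -1170945471880718299693056;
   -1957223460509072643588096; -2706754319385303409754112; -3105277682843109417811968;
   -2954789875487448791777280; -2324887670548427603705856; -1503050625635530479501312;
   -790171814471356542615552; -332464668078400019103744; -109306537793136510369792;
   -27061157383349798436864; -4745857258526009720832; -525732206100722221056;
   -27670116110564327424].

Definition cert_lo_bern : list R :=
  [-9895604649984; -326898550833152; -4161514072178688; -30265745476681728;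
   -146671724409126912; -512780682028646400; -1355191077077778432; -2787943193725894656;
   -4548846723199401984; -5954182213143625728; -6289472152835981312; -5367718469719425024;
   -3688674824244166656; -2023909839867559936; -873720479823642624; -289898768641127424;
   -71234442693598464; -12185111281278672; -1291748688934560; -63660214386897].

Lemma cert_hi_bernE p : cert_hi p * (3^22 * 2^38) = bern cert_hi_bern (4*p-1) (4-4*p).
Proof. unfold cert_hi, cert_hi_bern; simpl; ring. Qed.

Lemma cert_lo_bernE p : cert_lo p * 2^34 = bern cert_lo_bern (4*p) (1-4*p).
Proof. unfold cert_lo, cert_lo_bern; simpl; ring. Qed.

Lemma cert_hi_nonpos p : 1/4 <= p <= 1 -> cert_hi p <= 0.
Proof.
  intros Hp.
  assert (bern cert_hi_bern (4*p-1) (4-4*p) <= 0)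
    by (apply bern_nonpos; [unfold cert_hi_bern; repeat constructor|..]; lra).
  pose proof (cert_hi_bernE p); nra.
Qed.

Lemma cert_lo_nonpos p : 0 <= p <= 1/4 -> cert_lo p <= 0.
Proof.
  intros Hp.
  assert (bern cert_lo_bern (4*p) (1-4*p) <= 0)
    by (apply bern_nonpos; [unfold cert_lo_bern; repeat constructor|..]; lra).
  pose proof (cert_lo_bernE p); nra.
Qed.

Lemma Apar_onto A : 1 < A -> exists p, / (4*A) <= p < 1 /\ Apar p = A.
Proof.
  intros HA.
  set (f := fun p => 3 + 8*p^2 + 6*p^4 - p^8 - 16*A*p^2).
  set (p1 := / (4*A)).
  assert (Hp1 : 0 < p1 < 1/4).
  { unfold p1; split; [apply Rinv_0_lt_compat; lra|].
    apply Rmult_lt_reg_l with (4*A); [lra|]. rewrite Rinv_r; lra. }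
  assert (Hf1 : 0 <= f p1).
  { assert (E : 16*A*p1^2 = 4*p1) by (unfold p1; field; lra).
    unfold f; rewrite E.
    assert (p1^4 <= 1) by nra. assert (p1^8 <= 1) by nra. nra. }
  destruct (IVT_cor f p1 1 ltac:(unfold f; reg) ltac:(lra) ltac:(unfold f in *; nra))
    as [p [Hp Hfp]].
  assert (Hne : p <> 1) by (intros ->; unfold f in Hfp; rewrite !pow1 in Hfp; lra).
  assert (p < 1) by (apply Rnot_le_lt; intro; apply Hne; lra).
  exists p; split; [split; [apply Hp | assumption]|].
  unfold Apar, f in *; field_simplify_eq; lra.
Qed.

Lemma Phin_quad_convex A s M Mb : 0 <= A -> 0 <= M <= Mb ->
  Phi1 A s <= 0 -> Phin_quad A s Mb <= 0 -> Phin_quad A s M <= 0.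
Proof.
  unfold Phin_quad; intros HA HM H0 Hb.
  destruct (Req_dec Mb 0) as [->|Hnz]; [replace M with 0 by lra; lra|].
  assert (Hid : Mb * (Phi1 A s + 2*M*Phi2 A s + 4*A*M^2) =
    (Mb - M) * Phi1 A s + M * (Phi1 A s + 2*Mb*Phi2 A s + 4*A*Mb^2)
    - 4*A*M*(Mb - M)*Mb) by ring.
  assert (0 <= 4*A*M*(Mb - M)*Mb) by (repeat apply Rmult_le_pos; lra).
  assert (Mb * (Phi1 A s + 2*M*Phi2 A s + 4*A*M^2) <= 0) by nra.
  nra.
Qed.

(* On the curve [Phi0 = 0], [Phin_quad] is nonpositive at [M = 0] and, by the certificates,
   at the right end of the admissible range of [M]. *)
Lemma Phin_quad_par_nonpos p L : 0 < p < 1 -> 0 <= L ->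
  L <= (Apar p - 1)^2 / 8 -> L <= Apar p / 4 ->
  Phin_quad (Apar p) (spar p) (spar p ^ 3 * L) <= 0.
Proof.
  intros Hp HL Hhi Hlo.
  assert (Hs3 : 0 < spar p ^ 3) by (apply pow_lt; unfold spar; apply Rdiv_lt_0_compat; nra).
  assert (p^2 < 1) by nra.
  assert (p^4 < 1) by (replace (p^4) with (p^2 * p^2) by ring; nra).
  assert (HA : 0 < Apar p) by (unfold Apar; apply Rdiv_lt_0_compat; nra).
  assert (HPhi1 : Phi1 (Apar p) (spar p) <= 0).
  { rewrite Phi1_par by lra.
    assert (0 < p^12) by (apply pow_lt; lra).
    assert (0 <= (1-p^2)^6 * (1+p^2)^9) by (apply Rmult_le_pos; apply pow_le; nra).
    assert (0 <= (1-p^2)^6 * (1+p^2)^9 / (512*p^12)) by (apply Rdiv_le_0_compat; lra).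
    lra. }
  destruct (Rle_dec (1/4) p) as [Hq|Hq].
  - apply Phin_quad_convex with (Mb := spar p ^ 3 * (Apar p - 1)^2 / 8); [lra| |lra|].
    + split; [nra|]. unfold Rdiv; rewrite Rmult_assoc; apply Rmult_le_compat_l; lra.
    + rewrite Phin_quad_par_hi by lra.
      assert (cert_hi p <= 0) by (apply cert_hi_nonpos; lra).
      assert (0 <= p^20 * (1-p^2)^6 * (1+p^2)^9)
        by (apply Rmult_le_pos; [apply Rmult_le_pos|]; apply pow_le; nra).
      assert (p^20 * (1-p^2)^6 * (1+p^2)^9 * cert_hi p <= 0) by nra.
      assert (0 < / (2*p)^36) by (apply Rinv_0_lt_compat, pow_lt; lra).
      unfold Rdiv; nra.
  - apply Phin_quad_convex with (Mb := spar p ^ 3 * Apar p / 4); [lra| |lra|].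
    + split; [nra|]. unfold Rdiv; rewrite Rmult_assoc; apply Rmult_le_compat_l; lra.
    + rewrite Phin_quad_par_lo by lra.
      assert (cert_lo p <= 0) by (apply cert_lo_nonpos; lra).
      assert (0 <= p^11 * (1+p^2)^9) by (apply Rmult_le_pos; apply pow_le; nra).
      assert (p^11 * (1+p^2)^9 * cert_lo p <= 0) by nra.
      assert (0 < / (2*p)^24) by (apply Rinv_0_lt_compat, pow_lt; lra).
      unfold Rdiv; nra.
Qed.

Lemma Phin_nonpos_witness A L : 1 < A -> 0 <= L -> L <= (A-1)^2 / 8 -> L <= A / 4 ->
  exists s, 0 < s /\ A <= s^2 /\ Phin A L s <= 0.
Proof.
  intros HA HL Hhi Hlo.
  destruct (Apar_onto A HA) as [p [Hp <-]].
  assert (Hp0 : 0 < p) by (pose proof (Rinv_0_lt_compat (4 * Apar p)); lra).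
  exists (spar p); split; [|split].
  - unfold spar; apply Rdiv_lt_0_compat; nra.
  - pose proof (spar_sq_sub_Apar p ltac:(lra)).
    assert (0 <= (1 - p^4)^2 / (16*p^2)) by (apply Rdiv_le_0_compat; [apply pow2_ge_0 | nra]).
    lra.
  - rewrite Phin_Phi0_eq0 by (apply Phi0_par; lra).
    assert (0 <= spar p ^ 3 * L)
      by (apply Rmult_le_pos; [apply pow_le; unfold spar; apply Rdiv_le_0_compat|]; nra).
    pose proof (Phin_quad_par_nonpos p L ltac:(lra) HL Hhi Hlo).
    nra.
Qed.

Lemma continuity_pt_nonzero_near f r : continuity_pt f r -> f r <> 0 ->
  exists d, 0 < d /\ forall y, Rabs (y - r) < d -> f y <> 0.
Proof.
  intros Hc Hr.
  destruct (Hc (Rabs (f r)) (Rabs_pos_lt _ Hr)) as [d [Hd Hnear]].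
  exists d; split; [exact Hd|]; intros y Hy Hy0.
  destruct (Req_dec y r) as [->|Hne]; [contradiction|].
  assert (Habs : Rabs (f y - f r) < Rabs (f r)).
  { apply Hnear; split; [split; [exact I | intros ->; apply Hne; reflexivity] | exact Hy]. }
  rewrite Hy0, Rminus_0_l, Rabs_Ropp in Habs; lra.
Qed.

Lemma largest_zero_above (f : R -> R) t : continuity f ->
  (exists R0, forall x, R0 <= x -> 0 < f x) -> f t <= 0 ->
  exists r, t <= r /\ f r = 0 /\ forall x, f x = 0 -> x <= r.
Proof.
  intros Hc [R0 Hpos] Ht.
  set (R1 := Rmax R0 t).
  assert (HR1 : 0 < f R1) by (apply Hpos, Rmax_l).
  destruct (IVT_cor f t R1 Hc (Rmax_r R0 t) ltac:(nra)) as [z [Hz Hfz]].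
  set (E := fun x => f x = 0 /\ t <= x).
  assert (Hbound : bound E).
  { exists R0; intros x [Hx _]; apply Rnot_lt_le; intros Hlt.
    pose proof (Hpos x (Rlt_le _ _ Hlt)); lra. }
  destruct (completeness E Hbound (ex_intro _ z (conj Hfz (proj1 Hz)))) as [r [Hub Hlub]].
  assert (Htr : t <= r) by (apply Rle_trans with z; [lra | apply Hub; split; [|lra]; auto]).
  assert (Hfr : f r = 0).
  { apply NNPP; intros Hne.
    destruct (continuity_pt_nonzero_near f r (Hc r) Hne) as [d [Hd Hnear]].
    assert (r <= r - d); [|lra].
    apply Hlub; intros y Hy; apply Rnot_lt_le; intros Hlt.
    assert (y <= r) by (apply Hub; exact Hy).
    apply (Hnear y); [rewrite Rabs_left1; lra | apply Hy]. }
  exists r; split; [exact Htr|]; split; [exact Hfr|].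
  intros x Hx; destruct (Rle_dec t x); [apply Hub; split|]; auto; lra.
Qed.

Fixpoint horner (l : list R) (x : R) : R :=
  match l with nil => 0 | c :: l' => c + x * horner l' x end.

Lemma horner_eventually_pos l c : 0 < c ->
  exists e R0, 0 < e /\ forall x, R0 <= x -> e <= horner (l ++ [c]) x.
Proof.
  intros Hc; induction l as [|d l [e [R0 [He IH]]]].
  - exists c, 0; split; [exact Hc|]; intros x _; simpl; lra.
  - exists 1, (Rmax R0 (Rmax 0 ((1 - d) / e))); split; [lra|].
    intros x Hx; simpl.
    pose proof (Rmax_l R0 (Rmax 0 ((1 - d) / e))).
    pose proof (Rmax_r R0 (Rmax 0 ((1 - d) / e))).
    pose proof (Rmax_l 0 ((1 - d) / e)). pose proof (Rmax_r 0 ((1 - d) / e)).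
    specialize (IH x ltac:(lra)).
    assert (1 - d <= x * e).
    { replace (1 - d) with ((1 - d) / e * e) by (field; lra).
      apply Rmult_le_compat_r; lra. }
    nra.
Qed.

Definition Phi_C_low (a b lam : R) : list R :=
  [a^8*b^8; 0; 0; 6*a^6*b^6*lam^2; -12*a^6*b^6; 0;
   8*a^4*b^4*(a^2+b^2) + 12*a^4*b^4*lam^4; 6*a^4*b^4*lam^2; 30*a^4*b^4;
   -40*a^2*b^2*(a^2+b^2)*lam^2 + 8*a^2*b^2*lam^6;
   -48*a^2*b^2*(a^2+b^2) + 60*a^2*b^2*lam^4; 114*a^2*b^2*lam^2;
   16*a^4 + 68*a^2*b^2 + 16*b^4 - 4*(a^2+b^2)*lam^4;
   -24*(a^2+b^2)*lam^2; -24*(a^2+b^2); 2*lam^2].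

Lemma Phi_C_horner a b lam x : Phi_C a b lam x = horner (Phi_C_low a b lam ++ [9]) x.
Proof. unfold Phi_C; simpl; ring. Qed.

Lemma Phi_C_largest_root_above a b lam t : Phi_C a b lam t <= 0 ->
  exists r, is_largest_root_PhiC a b lam r /\ t <= r.
Proof.
  intros Ht.
  destruct (largest_zero_above (Phi_C a b lam) t) as [r [Htr [Hr Hmax]]]; auto.
  - unfold Phi_C; reg.
  - destruct (horner_eventually_pos (Phi_C_low a b lam) 9 ltac:(lra)) as [e [R0 [He H]]].
    exists R0; intros x Hx; rewrite Phi_C_horner; specialize (H x Hx); lra.
  - exists r; repeat split; auto.
Qed.

Definition common_quartic (a b lam s : R) : R :=
  (a^2 - s^2) * (s^2 - b^2) - 2 * lam^2 * s^3.

Lemma common_quartic_F a b lam s h :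
  common_quartic a b lam s = s^2 * F_T a b lam s h - F_C a b lam s h.
Proof. unfold common_quartic, F_T, F_C; field. Qed.

Lemma common_quartic_root_between a b lam s : 0 < b -> b < a -> 0 < s ->
  common_quartic a b lam s = 0 -> b <= s <= a.
Proof.
  unfold common_quartic; intros Hb Hab Hs E.
  assert (0 <= 2 * lam^2 * s^3)
    by (apply Rmult_le_pos; [nra | apply pow_le; lra]).
  assert (b^2 < a^2) by nra.
  split; apply Rnot_lt_le; intros Hlt.
  - assert (s^2 < b^2) by nra. assert ((a^2 - s^2) * (s^2 - b^2) < 0) by nra. lra.
  - assert (a^2 < s^2) by nra. assert ((a^2 - s^2) * (s^2 - b^2) < 0) by nra. lra.
Qed.

Lemma common_quartic_root_lam_bounds a b lam s : 0 < b -> b < a -> 0 < s ->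
  common_quartic a b lam s = 0 -> 8*lam^2*b^3 <= (a^2 - b^2)^2 /\ 4*lam^2*b <= a^2.
Proof.
  intros Hb Hab Hs E.
  destruct (common_quartic_root_between a b lam s Hb Hab Hs E) as [Hbs Hsa].
  unfold common_quartic in E.
  assert (HL : 0 <= lam^2) by nra.
  assert (Hs3 : b^3 <= s^3) by (apply pow_incr; lra).
  assert (0 < s^3) by (apply pow_lt; lra).
  split.
  - (* 4 (a^2 - s^2)(s^2 - b^2) <= (a^2 - b^2)^2 and s >= b *)
    assert (0 <= (a^2 + b^2 - 2*s^2)^2) by apply pow2_ge_0.
    assert (0 <= lam^2 * (s^3 - b^3)) by (apply Rmult_le_pos; lra).
    nra.
  - assert (H1 : 2*b*(s^2 - b^2) <= s^3).
    { assert (s^3 - 2*b*(s^2 - b^2) = b*((b - (s-b)/2)^2 + 3/4*(s-b)^2) + (s-b)^3)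
        by field.
      assert (0 <= (s-b)^3) by (apply pow_le; lra).
      assert (0 <= (b - (s-b)/2)^2) by apply pow2_ge_0.
      nra. }
    assert (0 <= s^2 * (s^2 - b^2)) by (apply Rmult_le_pos; nra).
    assert (2*lam^2*s^3 <= a^2*(s^2 - b^2)) by nra.
    assert (4*lam^2*b*s^3 <= a^2*s^3) by nra.
    nra.
Qed.

Lemma Phi_C_nonpos_beyond a b lam : 0 < b -> b < a ->
  8*lam^2*b^3 <= (a^2 - b^2)^2 -> 4*lam^2*b <= a^2 ->
  exists t, a <= t /\ Phi_C a b lam t <= 0.
Proof.
  intros Hb Hab H8 H4.
  assert (Hb2 : 0 < b^2) by nra.
  destruct (Phin_nonpos_witness (a^2/b^2) (lam^2/b)) as [s [Hs [Has Hphi]]].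
  - apply Rmult_lt_reg_r with (b^2); [lra|]; field_simplify; nra.
  - apply Rdiv_le_0_compat; nra.
  - apply Rmult_le_reg_r with (8*b^4); [nra|]; field_simplify; nra.
  - apply Rmult_le_reg_r with (4*b^2); [nra|]; field_simplify; nra.
  - exists (b*s); split.
    + apply Rnot_lt_le; intros Hlt.
      assert (0 < b*s) by nra.
      assert (a^2 <= (b*s)^2).
      { replace ((b*s)^2) with (b^2 * s^2) by ring.
        apply Rmult_le_reg_r with (/b^2); [apply Rinv_0_lt_compat; lra|].
        replace (b^2 * s^2 * /b^2) with (s^2) by (field; lra); exact Has. }
      nra.
    + rewrite Phi_C_scale by lra.
      replace (b*s/b) with s by (field; lra).
      assert (0 < b^16) by (apply pow_lt; lra).
      nra.
Qed.

Lemma common_quartic_root_below_largest_root a b lam s : 0 < b -> b < a -> 0 < s ->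
  common_quartic a b lam s = 0 -> exists r, is_largest_root_PhiC a b lam r /\ s <= r.
Proof.
  intros Hb Hab Hs E.
  destruct (common_quartic_root_between a b lam s Hb Hab Hs E) as [_ Hsa].
  destruct (common_quartic_root_lam_bounds a b lam s Hb Hab Hs E) as [H8 H4].
  destruct (Phi_C_nonpos_beyond a b lam Hb Hab H8 H4) as [t [Hat Ht]].
  destruct (Phi_C_largest_root_above a b lam t Ht) as [r [Hr Htr]].
  exists r; split; [exact Hr | lra].
Qed.

Definition h_common (a b lam s : R) : R := (2*s^2 - s*lam^2 + a^2 + b^2) / (2*s).

Lemma common_sysE a b lam s h : common_sys a b lam s h <->
  common_quartic a b lam s = 0 /\ 0 < s /\ h = h_common a b lam s.
Proof. reflexivity. Qed.

Lemma F_T_eq0 a b lam s h : 0 < s -> F_T a b lam s h = 0 <-> h = h_common a b lam s.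
Proof.
  intros Hs; unfold F_T, h_common; split; intros E.
  - apply Rmult_eq_reg_r with (2*s); [|lra]; field_simplify; lra.
  - subst h; field; lra.
Qed.

Lemma in_D_T_D_C_iff_common_sys a b lam s h : 0 < b -> b < a ->
  (in_D_T a b lam s h /\ in_D_C a b lam s h) <-> common_sys a b lam s h.
Proof.
  intros Hb Hab; rewrite common_sysE; unfold in_D_T, in_D_C; split.
  - intros [[HT [Hs _]] [HC _]].
    rewrite (common_quartic_F a b lam s h), HT, HC, <- F_T_eq0 by exact Hs.
    repeat split; auto; ring.
  - intros (E & Hs & Hh).
    assert (HT : F_T a b lam s h = 0) by (apply F_T_eq0; auto).
    assert (HC : F_C a b lam s h = 0)
      by (rewrite (common_quartic_F a b lam s h), HT in E; lra).
    destruct (common_quartic_root_between a b lam s Hb Hab Hs E) as [Hbs Hsa].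
    destruct (common_quartic_root_below_largest_root a b lam s Hb Hab Hs E) as [r Hr].
    repeat split; auto.
    + (* 2 lam^2 s^3 = (a^2 - s^2)(s^2 - b^2) <= a^2 s^2 *)
      unfold common_quartic in E.
      assert (0 <= (a^2 - s^2) * b^2) by (apply Rmult_le_pos; nra).
      assert (2*lam^2*s <= a^2) by (apply Rmult_le_reg_r with (s^2); nra).
      nra.
    + right; split; [exact Hs|]; exists r; exact Hr.
Qed.

Lemma Lambda_identity A B v : 0 < B -> B < v -> v < A ->
  3*A*B = v^2 + (A + B)*v ->
  (A^3 - 33*A^2*B - 33*A*B^2 + B^3 + (2*v + A + B)^3) / (54*A*B)
  = ((A - v) * (v - B))^2 / (4*v^3).
Proof.
  intros HB HBv HvA Hrel.
  assert (E : B = (v^2 + A*v) / (3*A - v)) by (field_simplify_eq; lra).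
  subst B; field; repeat split; try lra; nra.
Qed.

(* [crit a b ^ 2] is the positive root of [v^2 + (a^2+b^2) v = 3 a^2 b^2]. *)
Definition crit (a b : R) : R :=
  sqrt ((sqrt (a^4 + 14*a^2*b^2 + b^4) - (a^2 + b^2)) / 2).

Lemma crit_sq_spec a b : 0 < b -> b < a ->
  b^2 < crit a b ^ 2 < a^2 /\
  crit a b ^ 4 + (a^2 + b^2) * crit a b ^ 2 = 3*a^2*b^2 /\
  sqrt (a^4 + 14*a^2*b^2 + b^4) = 2 * crit a b ^ 2 + a^2 + b^2.
Proof.
  intros Hb Hab.
  set (q := a^4 + 14*a^2*b^2 + b^4).
  set (r := sqrt q).
  assert (Hr2 : r^2 = q) by (unfold r; rewrite <- Rsqr_pow2; apply Rsqr_sqrt; unfold q; nra).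
  assert (Hr0 : 0 <= r) by apply sqrt_pos.
  assert (Hb2 : 0 < b^2) by nra.
  assert (Hba : b^2 < a^2) by nra.
  assert (Hlo : a^2 + 3*b^2 < r).
  { apply Rnot_le_lt; intros Hle.
    assert (r^2 <= (a^2 + 3*b^2)^2) by (apply pow_incr; lra).
    assert (0 < b^2 * (a^2 - b^2)) by (apply Rmult_lt_0_compat; nra).
    unfold q in Hr2; nra. }
  assert (Hhi : r < 3*a^2 + b^2).
  { apply Rnot_le_lt; intros Hle.
    assert ((3*a^2 + b^2)^2 <= r^2) by (apply pow_incr; nra).
    assert (0 < a^2 * (a^2 - b^2)) by (apply Rmult_lt_0_compat; nra).
    unfold q in Hr2; nra. }
  assert (Hv : crit a b ^ 2 = (r - (a^2 + b^2)) / 2).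
  { unfold crit; change (sqrt (a^4 + 14*a^2*b^2 + b^4)) with r.
    rewrite <- Rsqr_pow2; apply Rsqr_sqrt; lra. }
  replace (crit a b ^ 4) with ((crit a b ^ 2)^2) by ring.
  rewrite Hv; repeat split; try lra.
  unfold q in Hr2; nra.
Qed.

Definition psi (a b s : R) : R := (a^2 - s^2) * (s^2 - b^2) / (2 * s^3).

Lemma crit_between a b : 0 < b -> b < a -> b < crit a b < a.
Proof.
  intros Hb Hab; destruct (crit_sq_spec a b Hb Hab) as [[Hlo Hhi] _].
  assert (0 <= crit a b) by apply sqrt_pos.
  split; apply Rnot_le_lt; intros Hle.
  - assert (crit a b ^ 2 <= b^2) by (apply pow_incr; lra).
    lra.
  - assert (a^2 <= crit a b ^ 2) by (apply pow_incr; lra).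
    lra.
Qed.

Lemma Lambda_psi_crit a b : 0 < b -> b < a -> Lambda a b = psi a b (crit a b) ^ 2.
Proof.
  intros Hb Hab.
  destruct (crit_sq_spec a b Hb Hab) as [[Hlo Hhi] [Hrel Hr]].
  pose proof (crit_between a b Hb Hab) as [Hm _].
  set (m := crit a b) in *.
  assert (Hm3 : 0 < m^3) by (apply pow_lt; lra).
  assert (Hq : a^4 + 14*a^2*b^2 + b^4 = (2*m^2 + a^2 + b^2)^2) by nra.
  unfold Lambda, psi; cbv zeta; rewrite Hr, Hq.
  replace (((a^2 - m^2) * (m^2 - b^2) / (2*m^3))^2)
    with (((a^2 - m^2) * (m^2 - b^2))^2 / (4*(m^2)^3)) by (field; lra).
  rewrite <- (Lambda_identity (a^2) (b^2) (m^2)) by nra.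
  field; nra.
Qed.

Lemma common_quartic_three_pos_roots a b lam x y z : 0 < b ->
  0 < x -> 0 < y -> 0 < z -> x <> y -> x <> z -> y <> z ->
  common_quartic a b lam x = 0 -> common_quartic a b lam y = 0 ->
  common_quartic a b lam z = 0 -> False.
Proof.
  unfold common_quartic; intros Hb Hx Hy Hz Hxy Hxz Hyz Gx Gy Gz.
  set (L := lam^2) in *.
  (* divided differences of the quartic at x, y, z *)
  set (Qxy := x^3 + x^2*y + x*y^2 + y^3 + 2*L*(x^2 + x*y + y^2) - (a^2 + b^2)*(x + y)).
  set (Qxz := x^3 + x^2*z + x*z^2 + z^3 + 2*L*(x^2 + x*z + z^2) - (a^2 + b^2)*(x + z)).
  set (Qxyz := x^2 + y^2 + z^2 + x*y + x*z + y*z + 2*L*(x + y + z) - (a^2 + b^2)).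
  assert (HQxy : Qxy = 0).
  { assert (E : (x - y) * Qxy = 0) by (unfold Qxy; nra).
    destruct (Rmult_integral _ _ E); [exfalso; apply Hxy|]; lra. }
  assert (HQxz : Qxz = 0).
  { assert (E : (x - z) * Qxz = 0) by (unfold Qxz; nra).
    destruct (Rmult_integral _ _ E); [exfalso; apply Hxz|]; lra. }
  assert (HQxyz : Qxyz = 0).
  { assert (E : (y - z) * Qxyz = 0) by (unfold Qxyz, Qxy, Qxz in *; nra).
    destruct (Rmult_integral _ _ E); [exfalso; apply Hyz|]; lra. }
  (* the fourth root would be [-(x+y+z+2L)] < 0, yet the product of all four is [a^2 b^2] > 0 *)
  assert (Id : a^2*b^2 = -((a^2 - x^2)*(x^2 - b^2) - 2*L*x^3) - Qxy*x + Qxyz*x*y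
                         - x*y*z*(x + y + z + 2*L)) by (unfold Qxy, Qxyz; ring).
  rewrite Gx, HQxy, HQxyz in Id.
  assert (0 <= L) by (unfold L; nra).
  assert (0 < x*y*z) by (apply Rmult_lt_0_compat; [apply Rmult_lt_0_compat|]; lra).
  assert (0 < a^2*b^2) by (apply Rmult_lt_0_compat; nra).
  nra.
Qed.

(* For [s > 0], [common_quartic = 0] reads [lam^2 = psi a b s]; [m] is where [psi] peaks. *)
Lemma common_quartic_peak a b lam m s : 0 < m ->
  m^4 + (a^2 + b^2)*m^2 = 3*a^2*b^2 ->
  m^3 * common_quartic a b lam s =
  2*m^3*s^3*(psi a b m - lam^2) - (s - m)^2 * (m^3*s^2 + 2*a^2*b^2*s + a^2*b^2*m).
Proof.
  intros Hm Hrel.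
  assert (Id : m^3 * common_quartic a b lam s
    - (2*m^3*s^3*(psi a b m - lam^2) - (s - m)^2 * (m^3*s^2 + 2*a^2*b^2*s + a^2*b^2*m))
    = (m^4 + (a^2 + b^2)*m^2 - 3*a^2*b^2) * (m*s^2 - s^3))
    by (unfold common_quartic, psi; field; lra).
  rewrite Hrel in Id; lra.
Qed.

Section CommonRoots.

Variables a b lam : R.
Hypothesis hb : 0 < b.
Hypothesis hab : b < a.

Local Notation m := (crit a b).

Lemma crit_pos : 0 < m.
Proof. pose proof (crit_between a b hb hab); lra. Qed.

Lemma psi_crit_pos : 0 < psi a b m.
Proof.
  pose proof (crit_sq_spec a b hb hab) as [[Hlo Hhi] _].
  pose proof crit_pos.
  unfold psi; apply Rdiv_lt_0_compat; [apply Rmult_lt_0_compat|]; try lra.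
  assert (0 < m^3) by (apply pow_lt; lra); lra.
Qed.

Lemma common_quartic_crit s :
  m^3 * common_quartic a b lam s =
  2*m^3*s^3*(psi a b m - lam^2) - (s - m)^2 * (m^3*s^2 + 2*a^2*b^2*s + a^2*b^2*m).
Proof.
  apply common_quartic_peak; [exact crit_pos|].
  pose proof (crit_sq_spec a b hb hab) as [_ [Hrel _]]; exact Hrel.
Qed.

Lemma common_quartic_crit_tail_pos s : 0 < s -> 0 < m^3*s^2 + 2*a^2*b^2*s + a^2*b^2*m.
Proof.
  intros Hs; pose proof crit_pos.
  assert (0 < m^3) by (apply pow_lt; lra).
  assert (0 < a^2*b^2) by (apply Rmult_lt_0_compat; nra).
  nra.
Qed.

Lemma common_quartic_two_roots : lam^2 < psi a b m ->
  exists s1 s2, 0 < s1 < s2 /\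
    forall s, 0 < s -> (common_quartic a b lam s = 0 <-> s = s1 \/ s = s2).
Proof.
  intros Hlt.
  pose proof (crit_between a b hb hab) as [Hbm Hma].
  assert (Hm3 : 0 < m^3) by (apply pow_lt; lra).
  assert (Hgm : 0 < common_quartic a b lam m).
  { pose proof (common_quartic_crit m) as E.
    replace ((m - m)^2) with 0 in E by ring.
    assert (0 < 2*m^3*m^3*(psi a b m - lam^2)) by (repeat apply Rmult_lt_0_compat; lra).
    nra. }
  assert (Hc : continuity (common_quartic a b lam)) by (unfold common_quartic; reg).
  assert (Hgb : common_quartic a b lam b <= 0).
  { unfold common_quartic; assert (0 < b^3) by (apply pow_lt; lra); nra. }
  assert (Hga : common_quartic a b lam a <= 0).
  { unfold common_quartic; assert (0 < a^3) by (apply pow_lt; lra); nra. }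
  destruct (IVT_cor _ b m Hc ltac:(lra) ltac:(nra)) as [s1 [Hs1 G1]].
  destruct (IVT_cor _ m a Hc ltac:(lra) ltac:(nra)) as [s2 [Hs2 G2]].
  assert (s1 <> m) by (intros E; rewrite E in G1; lra).
  assert (s2 <> m) by (intros E; rewrite E in G2; lra).
  exists s1, s2; split; [split; lra|]; intros s Hs; split.
  - intros Gs.
    destruct (Req_dec s s1) as [|N1]; [left; assumption|].
    destruct (Req_dec s s2) as [|N2]; [right; assumption|].
    exfalso; apply (common_quartic_three_pos_roots a b lam s s1 s2); auto; lra.
  - intros [-> | ->]; assumption.
Qed.

Lemma common_quartic_double_root : lam^2 = psi a b m ->
  forall s, 0 < s -> (common_quartic a b lam s = 0 <-> s = m).
Proof.
  intros Heq s Hs; pose proof (common_quartic_crit s) as E.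
  rewrite Heq, Rminus_diag, Rmult_0_r, Rminus_0_l in E.
  pose proof (common_quartic_crit_tail_pos s Hs).
  assert (0 < m^3) by (apply pow_lt, crit_pos).
  split.
  - intros G; rewrite G, Rmult_0_r in E.
    assert (E2 : (s - m) * (s - m) = 0) by nra.
    destruct (Rmult_integral _ _ E2); lra.
  - intros ->; rewrite Rminus_diag in E; nra.
Qed.

Lemma common_quartic_no_root : psi a b m < lam^2 ->
  forall s, 0 < s -> common_quartic a b lam s <> 0.
Proof.
  intros Hgt s Hs G; pose proof (common_quartic_crit s) as E.
  rewrite G, Rmult_0_r in E.
  pose proof (common_quartic_crit_tail_pos s Hs).
  assert (0 < m^3) by (apply pow_lt, crit_pos).
  assert (0 < s^3) by (apply pow_lt; lra).
  assert (0 <= (s - m)^2) by apply pow2_ge_0.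
  assert (0 < 2*m^3*s^3*(lam^2 - psi a b m))
    by (apply Rmult_lt_0_compat; [apply Rmult_lt_0_compat; [apply Rmult_lt_0_compat|]|]; lra).
  nra.
Qed.

Lemma tangent_at_crit : lam^2 = psi a b m ->
  tangent_at (F_T a b lam) (F_C a b lam) m (h_common a b lam m).
Proof.
  intros Heq; pose proof crit_pos as Hm.
  pose proof (crit_sq_spec a b hb hab) as [_ [Hrel _]].
  set (h0 := h_common a b lam m).
  assert (HT : F_T a b lam m h0 = 0) by (apply F_T_eq0; auto).
  assert (HC : F_C a b lam m h0 = 0).
  { pose proof (common_quartic_F a b lam m h0) as E.
    rewrite (proj2 (common_quartic_double_root Heq m Hm) eq_refl), HT in E; lra. }
  assert (D1 : Derive (fun x => F_T a b lam x h0) m = 4*m - 2*(h0 + lam^2/2))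
    by (apply is_derive_unique; unfold F_T; auto_derive; auto; field).
  assert (D2 : Derive (fun y => F_T a b lam m y) h0 = -2*m)
    by (apply is_derive_unique; unfold F_T; auto_derive; auto; field).
  assert (D3 : Derive (fun x => F_C a b lam x h0) m = 12*m^3 - 6*(h0 - lam^2/2)*m^2)
    by (apply is_derive_unique; unfold F_C; auto_derive; auto; field).
  assert (D4 : Derive (fun y => F_C a b lam m y) h0 = -2*m^3)
    by (apply is_derive_unique; unfold F_C; auto_derive; auto; field).
  unfold tangent_at; cbv zeta; rewrite D1, D2, D3, D4.
  assert (0 < m^3) by (apply pow_lt; lra).
  repeat split; auto; try (right; lra).
  replace ((4*m - 2*(h0 + lam^2/2)) * (-2*m^3) - (-2*m) * (12*m^3 - 6*(h0 - lam^2/2)*m^2))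
    with (2*(m^4 + (a^2 + b^2)*m^2 - 3*a^2*b^2))
    by (unfold h0, h_common; rewrite Heq; unfold psi; field; lra).
  lra.
Qed.

End CommonRoots.

Theorem proposition2 (a b lam : R) (hb : 0 < b) (hab : b < a) (hlam : 0 <= lam) :
  (lam ^ 4 < Lambda a b ->
     (forall s h, (in_D_T a b lam s h /\ in_D_C a b lam s h) <->
                  common_sys a b lam s h) /\
     exists s1 h1 s2 h2, (s1, h1) <> (s2, h2) /\
       forall s h, common_sys a b lam s h <-> ((s, h) = (s1, h1) \/ (s, h) = (s2, h2)))
  /\
  (lam ^ 4 = Lambda a b ->
     (forall s h, (in_D_T a b lam s h /\ in_D_C a b lam s h) <->
                  common_sys a b lam s h) /\
     exists s0 h0,
       (forall s h, common_sys a b lam s h <-> (s, h) = (s0, h0)) /\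
       tangent_at (F_T a b lam) (F_C a b lam) s0 h0)
  /\
  (Lambda a b < lam ^ 4 ->
     forall s h, ~ (in_D_T a b lam s h /\ in_D_C a b lam s h)).
Proof.
  pose proof (fun s h => in_D_T_D_C_iff_common_sys a b lam s h hb hab) as Hiff.
  pose proof (psi_crit_pos a b hb hab) as Hpsi.
  assert (HL : 0 <= lam^2) by nra.
  replace (lam ^ 4) with ((lam^2)^2) by ring.
  rewrite (Lambda_psi_crit a b hb hab).
  split; [|split]; intros Hcmp.
  - split; [exact Hiff|].
    destruct (common_quartic_two_roots a b lam hb hab ltac:(nra)) as (s1 & s2 & Hs & Hroots).
    exists s1, (h_common a b lam s1), s2, (h_common a b lam s2); split.
    + intros E; injection E; lra.
    + intros s h; rewrite common_sysE; split.
      * intros (G & Hs0 & ->); destruct (proj1 (Hroots s Hs0) G) as [-> | ->]; auto.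
      * intros [E | E]; injection E; intros -> ->; repeat split; try lra;
          apply Hroots; auto; lra.
  - split; [exact Hiff|].
    assert (Heq : lam^2 = psi a b (crit a b)) by nra.
    pose proof (crit_pos a b hb hab) as Hm.
    exists (crit a b), (h_common a b lam (crit a b)); split.
    + intros s h; rewrite common_sysE; split.
      * intros (G & Hs & ->).
        rewrite (proj1 (common_quartic_double_root a b lam hb hab Heq s Hs) G); reflexivity.
      * intros E; injection E; intros -> ->; repeat split; auto.
        apply (common_quartic_double_root a b lam hb hab Heq); auto.
    + apply tangent_at_crit; assumption.
  - intros s h Hsh; apply Hiff in Hsh.
    destruct Hsh as (G & Hs & _).
    apply (common_quartic_no_root a b lam hb hab ltac:(nra) s Hs G).
Qed.
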